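(* Let $\mathbb{F}$ be a field of characteristic different from $2$, let $n\geq3$, and let $\mathcal{A}$ be a division $*$-algebra which is one of: $\mathbb{F}$, a binarion algebra $\mathcal{B}(\mathbb{F})$, or a quaternion algebra $\mathcal{Q}(\mathbb{F})$. Let $H_n(\mathcal{A})$ be the Jordan algebra of self-adjoint $n\times n$ matrices over $\mathcal{A}$. Then every 2-local 1-automorphism on $H_n(\mathcal{A})$ is an automorphism.
   Context: $\mathbb{F}$ carries the trivial involution. $\mathcal{B}(\mathbb{F})$ is the associative unital algebra with basis $\mathbf{1},i$, $i^2=\lambda\mathbf{1}$ ($\lambda\neq0$), involution $\overline{\alpha_0+\alpha_1i}=\alpha_0-\alpha_1i$. $\mathcal{Q}(\mathbb{F})$ is the associative unital algebra with basis $\mathbf{1},i,j,k$, $i^2=\lambda\mathbf{1}$, $j^2=\mu\mathbf{1}$, $ij=-ji=k$ ($\lambda,\mu\neq0$), involution negating the $i,j,k$ coordinates. $M_n(\mathcal{A})$ has involution $(a_{i,j})^*=(\overline{a_{j,i}})$, $H_n(\mathcal{A})=\{x:x^*=x\}$ with Jordan product $a\circ b=\frac12(ab+ba)$. A symmetry is $s\in H_n(\mathcal{A})$ with $s\circ s=1$ (identity matrix), and $U_s(x)=2s\circ(s\circ x)-x$. A 2-local 1-automorphism is a map $\Delta:H_n(\mathcal{A})\to H_n(\mathcal{A})$ (not assumed linear) such that for every $x,y$ there is a symmetry $s$ with $\Delta(x)=U_s(x)$, $\Delta(y)=U_s(y)$. *)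

From mathcomp Require Import all_boot all_order all_algebra.
Set Implicit Arguments. Unset Strict Implicit. Unset Printing Implicit Defensive.
Import GRing.Theory.
Local Open Scope ring_scope.

(* Elements a0*1 + a1*i + a2*j + a3*k of the quaternion algebra Q(F)
   with i^2 = lam, j^2 = mu, ij = -ji = k.  The algebra F and the binarion
   algebra B(F) are realised as the *-subalgebras {a1=a2=a3=0} and
   {a2=a3=0} respectively (see [inA]). *)
Record quat (F : Type) := Quat { q0 : F; q1 : F; q2 : F; q3 : F }.

Section QuatOps.
Variable F : fieldType.
Variables lam mu : F.

Definition qzero : quat F := Quat 0 0 0 0.
Definition qone : quat F := Quat 1 0 0 0.
Definition qadd (a b : quat F) : quat F :=
  Quat (q0 a + q0 b) (q1 a + q1 b) (q2 a + q2 b) (q3 a + q3 b).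
Definition qopp (a : quat F) : quat F := Quat (- q0 a) (- q1 a) (- q2 a) (- q3 a).
Definition qscale (c : F) (a : quat F) : quat F :=
  Quat (c * q0 a) (c * q1 a) (c * q2 a) (c * q3 a).
(* k^2 = -lam*mu, ik = lam j, ki = -lam j, jk = -mu i, kj = mu i *)
Definition qmul (a b : quat F) : quat F :=
  Quat (q0 a * q0 b + lam * (q1 a * q1 b) + mu * (q2 a * q2 b)
          - lam * mu * (q3 a * q3 b))
       (q0 a * q1 b + q1 a * q0 b - mu * (q2 a * q3 b) + mu * (q3 a * q2 b))
       (q0 a * q2 b + q2 a * q0 b + lam * (q1 a * q3 b) - lam * (q3 a * q1 b))
       (q0 a * q3 b + q3 a * q0 b + q1 a * q2 b - q2 a * q1 b).
Definition qconj (a : quat F) : quat F := Quat (q0 a) (- q1 a) (- q2 a) (- q3 a).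

End QuatOps.

Inductive akind := KindF | KindB | KindQ.

Definition inA (F : fieldType) (k : akind) (a : quat F) : Prop :=
  match k with
  | KindF => q1 a = 0 /\ q2 a = 0 /\ q3 a = 0
  | KindB => q2 a = 0 /\ q3 a = 0
  | KindQ => True
  end.

Definition division_alg (F : fieldType) (lam mu : F) (k : akind) : Prop :=
  forall a, inA k a -> a <> qzero F ->
    exists b, inA k b /\ qmul lam mu a b = qone F /\ qmul lam mu b a = qone F.

Section MatOps.
Variable F : fieldType.
Variables lam mu : F.
Variable n : nat.
Local Notation M := 'M[quat F]_n.

Definition madd (x y : M) : M := \matrix_(i, j) qadd (x i j) (y i j).
Definition mopp (x : M) : M := \matrix_(i, j) qopp (x i j).
Definition mscale (c : F) (x : M) : M := \matrix_(i, j) qscale c (x i j).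
Definition mmul (x y : M) : M :=
  \matrix_(i, j) \big[@qadd F/qzero F]_(l < n) qmul lam mu (x i l) (y l j).
Definition mid : M := \matrix_(i, j) if i == j then qone F else qzero F.
Definition madj (x : M) : M := \matrix_(i, j) qconj (x j i).

Definition inH (k : akind) (x : M) : Prop :=
  (forall i j, inA k (x i j)) /\ madj x = x.

Definition jprod (x y : M) : M := mscale (2%:R)^-1 (madd (mmul x y) (mmul y x)).

Definition symmetry (k : akind) (s : M) : Prop := inH k s /\ jprod s s = mid.

Definition Uop (s x : M) : M := madd (mscale 2%:R (jprod s (jprod s x))) (mopp x).

(* 2-local 1-automorphism of H_n(A) (only values on H_n(A) matter) *)
Definition two_local_1_aut (k : akind) (D : M -> M) : Prop :=
  forall x y, inH k x -> inH k y ->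
    exists s, symmetry k s /\ D x = Uop s x /\ D y = Uop s y.

Definition jordan_automorphism (k : akind) (D : M -> M) : Prop :=
  (forall x, inH k x -> inH k (D x)) /\
  (forall x y, inH k x -> inH k y -> D (madd x y) = madd (D x) (D y)) /\
  (forall (c : F) x, inH k x -> D (mscale c x) = mscale c (D x)) /\
  (forall x y, inH k x -> inH k y -> D (jprod x y) = jprod (D x) (D y)) /\
  (forall x y, inH k x -> inH k y -> D x = D y -> x = y) /\
  (forall y, inH k y -> exists2 x, inH k x & D x = y).

End MatOps.

(* By 2-locality every value D x is s x s for a symmetry s (s^2 = 1), and any two values
   D x, D y come from a common s.  Hence D maps H_n(A) into itself, commutes with squaring
   and preserves the trace form (x, y) |-> Re tr (x y), which is nondegenerate on H_n(A)
   once 2, lam and mu are invertible.  A map preserving a nondegenerate symmetric form on a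
   finite-dimensional space is a linear bijection: the Gram matrix G of a spanning family b
   satisfies G = M G M^T, where M holds the coordinates of the D b_i, so M G has the rank of
   G and the D b_i span again; then D (a x + y) - a D x - D y is orthogonal to everything.
   Finally the Jordan product is recovered from squares by polarization. *)

From HB Require Import structures.
From mathcomp Require Import all_boot all_order all_algebra ring.
Set Implicit Arguments. Unset Strict Implicit. Unset Printing Implicit Defensive.
Import GRing.Theory.
Local Open Scope ring_scope.

Lemma mulmx_polar (R : pzRingType) n (x y : 'M[R]_n) :
  x *m y + y *m x = (x + y) *m (x + y) - x *m x - y *m y.
Proof.
by rewrite mulmxDl !mulmxDr -addrA -opprD [y *m x + _]addrC addrACA addrAC subrr add0r.
Qed.

Lemma rowspace_fixed_sandwich (F : fieldType) m p (G : 'M[F]_(m, p)) (M : 'M[F]_m)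
    (N : 'M[F]_p) :
  G = M *m G *m N -> (G <= M *m G)%MS.
Proof.
move=> defG; have sub := submxMl M G.
rewrite -(mxrank_leqif_sup sub).2 eqn_leq mxrankM_maxr /=.
by rewrite {1}defG mxrankM_maxl.
Qed.

Section FormIsometry.
Variables (F : fieldType) (V : lmodType F) (S : V -> Prop) (B : V -> V -> F).
Hypothesis S0 : S 0.
Hypothesis S_lin : forall a x y, S x -> S y -> S (a *: x + y).
Hypothesis B_sym : forall x y, B x y = B y x.
Hypothesis B_linear : forall a x y z, B (a *: x + y) z = a * B x z + B y z.
Hypothesis B_nondeg : forall x, S x -> (forall y, S y -> B x y = 0) -> x = 0.
Variables (m : nat) (b : 'I_m -> V) (coord : 'I_m -> V -> F).
Hypothesis b_S : forall i, S (b i).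
Hypothesis coordK : forall x, S x -> x = \sum_i coord i x *: b i.
Variable D : V -> V.
Hypothesis D_S : forall x, S x -> S (D x).
Hypothesis D_isometry : forall x y, S x -> S y -> B (D x) (D y) = B x y.

Let S_sub x y : S x -> S y -> S (x - y).
Proof. by move=> Sx Sy; rewrite -scaleN1r addrC; apply: S_lin. Qed.

Let S_comb (u : 'I_m -> F) (f : 'I_m -> V) :
  (forall i, S (f i)) -> S (\sum_i u i *: f i).
Proof.
move=> Sf; apply: big_ind => // [x y Sx Sy|i _]; first by rewrite -[x]scale1r; apply: S_lin.
by rewrite -[_ *: _]addr0; apply: S_lin.
Qed.

Let B_0l z : B 0 z = 0.
Proof.
have := B_linear 1 0 0 z; rewrite scale1r addr0 mul1r => B00.
by apply: (addrI (B 0 z)); rewrite addr0 -B00.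
Qed.

Lemma B_combl (u : 'I_m -> F) (f : 'I_m -> V) z :
  B (\sum_i u i *: f i) z = \sum_i u i * B (f i) z.
Proof.
rewrite (big_morph (B^~ z) (id1 := 0) (op1 := +%R)) ?B_0l //.
  by apply: eq_bigr => i _; rewrite -[_ *: _]addr0 B_linear B_0l addr0.
by move=> x y; rewrite -[x in LHS]scale1r B_linear mul1r.
Qed.

Let B_coord x z : S x -> B x z = \sum_i coord i x * B (b i) z.
Proof. by move/coordK=> {1}->; rewrite B_combl. Qed.

Let B_subl x y z : B (x - y) z = B x z - B y z.
Proof. by rewrite -scaleN1r addrC B_linear mulN1r addrC. Qed.

Let Db_S i : S (D (b i)). Proof. exact/D_S/b_S. Qed.

Let gram : 'M[F]_m := \matrix_(i, j) B (b i) (b j).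
Let coord_D : 'M[F]_m := \matrix_(i, j) coord j (D (b i)).

Let gram_D : gram = coord_D *m gram *m coord_D^T.
Proof.
apply/matrixP => i j; rewrite !mxE -D_isometry // B_sym B_coord //.
apply: eq_bigr => l _; rewrite !mxE mulrC B_sym B_coord //; congr (_ * _).
by apply: eq_bigr => p _; rewrite !mxE.
Qed.

Lemma isometry_range_span v : S v -> exists u : 'I_m -> F, v = \sum_i u i *: D (b i).
Proof.
move=> Sv; pose r := \row_i coord i v.
(* r *m gram lists the pairings B v (b j); it lies in the row space of coord_D *m gram,
   whose rows list the pairings B (D (b i)) (b j). *)
have /submxP[u ru] := submx_trans (submxMl r gram) (rowspace_fixed_sandwich gram_D).
exists (fun i => u 0 i); set w := \sum_i _.
have Sw : S w by apply: S_comb.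
apply/eqP; rewrite -subr_eq0; apply/eqP/B_nondeg => [|y Sy]; first exact: S_sub.
rewrite B_sym B_coord // big1 // => j _; rewrite B_sym.
rewrite B_subl; have -> : B v (b j) = B w (b j).
  rewrite B_coord // B_combl; transitivity ((r *m gram) 0 j).
    by rewrite mxE; apply: eq_bigr => i _; rewrite !mxE.
  rewrite ru mxE; apply: eq_bigr => i _; rewrite !mxE B_coord //; congr (_ * _).
  by apply: eq_bigr => l _; rewrite !mxE.
by rewrite subrr mulr0.
Qed.

Lemma isometry_linear a x y : S x -> S y -> D (a *: x + y) = a *: D x + D y.
Proof.
move=> Sx Sy; have Saxy : S (a *: x + y) by apply: S_lin.
have SDxy : S (a *: D x + D y) by apply: S_lin; apply: D_S.
apply/eqP; rewrite -subr_eq0; apply/eqP/B_nondeg => [|v Sv].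
  by apply: S_sub => //; apply: D_S.
have [u ->] := isometry_range_span Sv; rewrite B_sym B_combl big1 // => i _.
rewrite B_sym B_subl B_linear !D_isometry ?B_linear //.
by rewrite -B_linear subrr mulr0.
Qed.

Let isometry0 : D 0 = 0.
Proof.
have := isometry_linear 1 S0 S0; rewrite !scale1r addr0 => D00.
by apply: (addrI (D 0)); rewrite addr0 -D00.
Qed.

Lemma isometry_injective x y : S x -> S y -> D x = D y -> x = y.
Proof.
move=> Sx Sy Dxy; apply/eqP; rewrite -subr_eq0; apply/eqP/B_nondeg => [|z Sz]; first exact: S_sub.
have Dsub : D (x - y) = D x - D y.
  by rewrite addrC -scaleN1r isometry_linear // scaleN1r addrC.
by rewrite -D_isometry ?Dsub ?Dxy ?subrr ?B_0l //; apply: S_sub.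
Qed.

Lemma isometry_surjective y : S y -> exists2 x, S x & D x = y.
Proof.
move=> /isometry_range_span[u ->].
suff [] : S (\sum_i u i *: b i) /\ D (\sum_i u i *: b i) = \sum_i u i *: D (b i).
  by exists (\sum_i u i *: b i).
elim/big_rec2: _ => [|i x z _ [Sx <-]]; first by split; last exact: isometry0.
by split; [apply: S_lin | apply: isometry_linear].
Qed.

Theorem isometry_linear_bijective :
  [/\ forall x y, S x -> S y -> D (x + y) = D x + D y,
       forall a x, S x -> D (a *: x) = a *: D x,
       forall x y, S x -> S y -> D x = D y -> x = y &
       forall y, S y -> exists2 x, S x & D x = y].
Proof.
split; [|move=> a x Sx|exact: isometry_injective|exact: isometry_surjective].
  by move=> x y Sx Sy; have := isometry_linear 1 Sx Sy; rewrite !scale1r.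
by have := isometry_linear a Sx S0; rewrite !addr0 isometry0 addr0.
Qed.

End FormIsometry.

Lemma quat_ext (F : Type) (a b : quat F) :
  q0 a = q0 b -> q1 a = q1 b -> q2 a = q2 b -> q3 a = q3 b -> a = b.
Proof. by case: a b => [????] [????] /= -> -> -> ->. Qed.

(* The ring structure of Q(F) depends on lam and mu, so it lives on an alias indexed by them. *)
Definition quat_ring (F : fieldType) of F & F := quat F.

Ltac quat_solve :=
  repeat match goal with a : quat _ |- _ => case: a | a : quat_ring _ _ |- _ => case: a end;
  intros; apply: quat_ext => /=; ring.

Section QuaternionRing.
Variables (F : fieldType) (lam mu : F).

Local Notation Q := (quat_ring lam mu).

Definition quat_tuple (a : quat F) := (q0 a, q1 a, q2 a, q3 a).
Definition tuple_quat (t : F * F * F * F) := let: (a, b, c, d) := t in Quat a b c d.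
Lemma quat_tupleK : cancel quat_tuple tuple_quat. Proof. by case. Qed.
HB.instance Definition _ := Choice.copy Q (can_type quat_tupleK).

Lemma qaddA : associative (@qadd F). Proof. move=> ???; quat_solve. Qed.
Lemma qaddC : commutative (@qadd F). Proof. move=> ??; quat_solve. Qed.
Lemma qadd0 : left_id (qzero F) (@qadd F). Proof. move=> ?; quat_solve. Qed.
Lemma qaddN : left_inverse (qzero F) (@qopp F) (@qadd F). Proof. move=> ?; quat_solve. Qed.
Lemma qmulA : associative (qmul lam mu). Proof. move=> ???; quat_solve. Qed.
Lemma qmul1 : left_id (qone F) (qmul lam mu). Proof. move=> ?; quat_solve. Qed.
Lemma qmulr1 : right_id (qone F) (qmul lam mu). Proof. move=> ?; quat_solve. Qed.
Lemma qmulDl : left_distributive (qmul lam mu) (@qadd F). Proof. move=> ???; quat_solve. Qed.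
Lemma qmulDr : right_distributive (qmul lam mu) (@qadd F). Proof. move=> ???; quat_solve. Qed.
Lemma qone_neq0 : (qone F : Q) != qzero F.
Proof. by apply/eqP => /(congr1 (@q0 F))/eqP; rewrite oner_eq0. Qed.

HB.instance Definition _ := GRing.isNzRing.Build Q
  qaddA qaddC qadd0 qaddN qmulA qmul1 qmulr1 qmulDl qmulDr qone_neq0.

Definition qscalar (c : F) : Q := Quat c 0 0 0.

Lemma qscalar_is_zmod_morphism : zmod_morphism qscalar.
Proof. by move=> c d; quat_solve. Qed.
Lemma qscalar_is_monoid_morphism : monoid_morphism qscalar.
Proof. by split=> [|c d]; quat_solve. Qed.
HB.instance Definition _ := GRing.isZmodMorphism.Build F Q qscalar qscalar_is_zmod_morphism.
HB.instance Definition _ := GRing.isMonoidMorphism.Build F Q qscalar qscalar_is_monoid_morphism.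

Lemma qscalarC c (a : Q) : qscalar c * a = a * qscalar c. Proof. quat_solve. Qed.

Definition qre (a : Q) : F := q0 a.

Lemma qre_is_zmod_morphism : zmod_morphism qre. Proof. by []. Qed.
HB.instance Definition _ := GRing.isZmodMorphism.Build Q F qre qre_is_zmod_morphism.

Lemma qre_mulC (a b : Q) : qre (a * b) = qre (b * a).
Proof. by case: a b => [????] [????]; rewrite /qre /=; ring. Qed.
Lemma qre_scalar c (a : Q) : qre (qscalar c * a) = c * qre a.
Proof. by case: a => ????; rewrite /qre /=; ring. Qed.

Definition qbar (a : Q) : Q := qconj a.

Lemma qbar_is_zmod_morphism : zmod_morphism qbar.
Proof. by move=> a b; quat_solve. Qed.
HB.instance Definition _ := GRing.isZmodMorphism.Build Q Q qbar qbar_is_zmod_morphism.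

Lemma qbarM (a b : Q) : qbar (a * b) = qbar b * qbar a. Proof. quat_solve. Qed.
Lemma qbarK : involutive qbar. Proof. move=> ?; quat_solve. Qed.
Lemma qbar_scalarM c a : qbar (qscalar c * a) = qscalar c * qbar a. Proof. quat_solve. Qed.

Lemma qre_mul_eq0 (a : Q) : lam != 0 -> mu != 0 -> (forall e, qre (a * e) = 0) -> a = 0.
Proof.
move=> lam0 mu0 ae0; case: a ae0 => a0 a1 a2 a3 ae0.
have := ae0 (Quat 1 0 0 0); have := ae0 (Quat 0 1 0 0).
have := ae0 (Quat 0 0 1 0); have := ae0 (Quat 0 0 0 1); rewrite /qre /=.
rewrite !(mulr0, mulr1, addr0, add0r, subr0, sub0r) => /eqP.
rewrite oppr_eq0 !mulf_eq0 (negbTE lam0) (negbTE mu0) => /eqP a3_0 /eqP.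
rewrite mulf_eq0 (negbTE mu0) => /eqP a2_0 /eqP.
by rewrite mulf_eq0 (negbTE lam0) => /eqP a1_0 a0_0; apply: quat_ext.
Qed.

Definition qbasis (q : 'I_4) : Q :=
  match nat_of_ord q with 0 => 1 | 1 => Quat 0 1 0 0 | 2 => Quat 0 0 1 0 | _ => Quat 0 0 0 1 end.
Definition qcoord (q : 'I_4) (a : Q) : F :=
  match nat_of_ord q with 0 => q0 a | 1 => q1 a | 2 => q2 a | _ => q3 a end.

Lemma quat_sum_basis (a : Q) : a = \sum_q qscalar (qcoord q a) * qbasis q.
Proof.
rewrite !big_ord_recl big_ord0 /qcoord /qbasis !lift0 /=.
by case: a => ????; apply: quat_ext => /=; ring.
Qed.

Variable k : akind.

Lemma inA0 : inA k (0 : Q). Proof. by case: k. Qed.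
Lemma inA_scalar c : inA k (qscalar c). Proof. by case: k. Qed.

Lemma inAD (a b : Q) : inA k a -> inA k b -> inA k (a + b).
Proof.
case: a b => [????] [????]; case: k => //=; last by move=> [-> ->] [-> ->]; rewrite !addr0.
by move=> [-> [-> ->]] [-> [-> ->]]; rewrite !addr0.
Qed.

Lemma inAN (a : Q) : inA k a -> inA k (- a).
Proof.
case: a => ????; case: k => //=; last by move=> [-> ->]; rewrite !oppr0.
by move=> [-> [-> ->]]; rewrite !oppr0.
Qed.

Lemma inAM (a b : Q) : inA k a -> inA k b -> inA k (a * b).
Proof.
case: a b => [????] [????]; case: k => //=; last by move=> [-> ->] [-> ->]; split; ring.
by move=> [-> [-> ->]] [-> [-> ->]]; split; [|split]; ring.
Qed.

Lemma inA_qbar (a : Q) : inA k a -> inA k (qbar a).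
Proof. by move/inAN; case: a => ????; case: k. Qed.

Definition projA (a : Q) : Q :=
  match k with
  | KindF => Quat (q0 a) 0 0 0
  | KindB => Quat (q0 a) (q1 a) 0 0
  | KindQ => a
  end.

Lemma projA_inA a : inA k (projA a). Proof. by rewrite /projA; case: k. Qed.

Lemma projA_id a : inA k a -> projA a = a.
Proof.
case: a => ????; rewrite /projA; case: k => //=; last by move=> [-> ->].
by move=> [-> [-> ->]].
Qed.

Lemma projA_is_zmod_morphism : zmod_morphism projA.
Proof. by rewrite /projA => a b; case: k => //; quat_solve. Qed.
HB.instance Definition _ := GRing.isZmodMorphism.Build Q Q projA projA_is_zmod_morphism.

Lemma projA_scalar c a : projA (qscalar c * a) = qscalar c * projA a.
Proof. by rewrite /projA; case: k => //; quat_solve. Qed.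

Lemma qre_mul_projA (a b : Q) : inA k a -> qre (a * projA b) = qre (a * b).
Proof.
case: a b => [????] [????]; rewrite /projA /qre; case: k => //=.
  by move=> [-> [-> ->]]; ring.
by move=> [-> ->]; ring.
Qed.

End QuaternionRing.

Section HermitianMatrices.
Variables (F : fieldType) (lam mu : F) (k : akind) (n : nat).
Local Notation Q := (quat_ring lam mu).
Local Notation M := 'M[Q]_n.

Lemma maddE (x y : M) : madd x y = x + y.
Proof. by apply/matrixP => i j; rewrite !mxE. Qed.
Lemma moppE (x : M) : mopp x = - x.
Proof. by apply/matrixP => i j; rewrite !mxE. Qed.
Lemma mscaleE c (x : M) : mscale c x = qscalar lam mu c *: x.
Proof. by apply/matrixP => i j; rewrite !mxE; quat_solve. Qed.
Lemma mmulE (x y : M) : mmul lam mu x y = x *m y.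
Proof. by apply/matrixP => i j; rewrite !mxE. Qed.
Lemma midE : mid F n = 1%:M :> M.
Proof. by apply/matrixP => i j; rewrite !mxE; case: eqP. Qed.

Lemma mulmx_scalar c (x y : M) : x *m (qscalar lam mu c *: y) = qscalar lam mu c *: (x *m y).
Proof.
apply/matrixP => i j; rewrite !mxE mulr_sumr; apply: eq_bigr => l _.
by rewrite !mxE mulrA -qscalarC mulrA.
Qed.

Definition adjmx (x : M) : M := \matrix_(i, j) qbar (x j i).

Lemma madjE (x : M) : madj x = adjmx x. Proof. by []. Qed.

Lemma adjmxD (x y : M) : adjmx (x + y) = adjmx x + adjmx y.
Proof. by apply/matrixP => i j; rewrite !mxE raddfD. Qed.

Lemma adjmxK : involutive adjmx.
Proof. by move=> x; apply/matrixP => i j; rewrite !mxE qbarK. Qed.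
Lemma adjmxZ c (x : M) : adjmx (qscalar lam mu c *: x) = qscalar lam mu c *: adjmx x.
Proof. by apply/matrixP => i j; rewrite !mxE; apply: qbar_scalarM. Qed.
Lemma adjmxM (x y : M) : adjmx (x *m y) = adjmx y *m adjmx x.
Proof.
apply/matrixP => i j; rewrite !mxE raddf_sum; apply: eq_bigr => l _.
by rewrite !mxE; apply: qbarM.
Qed.

Lemma inA_mulmx (x y : M) : (forall i j, inA k (x i j)) -> (forall i j, inA k (y i j)) ->
  forall i j, inA k ((x *m y) i j).
Proof.
move=> Ax Ay i j; rewrite mxE.
by apply: big_ind => [|a b|l _]; [apply: inA0 | apply: inAD | apply: inAM].
Qed.

Lemma inH0 : inH k (0 : M).
Proof.
split; first by move=> i j; rewrite mxE; apply: inA0.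
by apply/matrixP => i j; rewrite !mxE; quat_solve.
Qed.

Lemma inH_adjmx (x : M) : inH k x -> adjmx x = x. Proof. by case. Qed.

Lemma inHD (x y : M) : inH k x -> inH k y -> inH k (x + y).
Proof.
move=> hx hy; split; last by rewrite madjE adjmxD !inH_adjmx.
by move=> i j; rewrite mxE; apply: inAD; [apply: hx.1 | apply: hy.1].
Qed.

Lemma inHZ c (x : M) : inH k x -> inH k (qscalar lam mu c *: x).
Proof.
move=> hx; split; last by rewrite madjE adjmxZ inH_adjmx.
by move=> i j; rewrite mxE; apply: inAM; [apply: inA_scalar | apply: hx.1].
Qed.

Lemma inHB (x y : M) : inH k x -> inH k y -> inH k (x - y).
Proof.
move=> hx hy; rewrite -scaleN1r -(rmorphN1 (qscalar lam mu)) addrC.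
by apply: inHD => //; apply: inHZ.
Qed.

Lemma inH_sandwich (s x : M) : inH k s -> inH k x -> inH k (s *m x *m s).
Proof.
move=> hs hx; split; last by rewrite madjE !adjmxM !inH_adjmx // mulmxA.
exact: inA_mulmx (inA_mulmx hs.1 hx.1) hs.1.
Qed.

Lemma inH_sqr (x : M) : inH k x -> inH k (x *m x).
Proof.
move=> hx; split; last by rewrite madjE adjmxM inH_adjmx.
exact: inA_mulmx hx.1 hx.1.
Qed.

Definition trform (x y : M) : F := qre (\tr (x *m y)).

Lemma trformDl (x y z : M) : trform (x + y) z = trform x z + trform y z.
Proof. by rewrite /trform mulmxDl mxtraceD raddfD. Qed.

Lemma trformZl a (x z : M) : trform (qscalar lam mu a *: x) z = a * trform x z.
Proof. by rewrite /trform -scalemxAl mxtraceZ; apply: qre_scalar. Qed.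

Lemma trformC (x y : M) : trform x y = trform y x.
Proof.
rewrite /trform /mxtrace !raddf_sum; under eq_bigr do rewrite mxE raddf_sum.
under [RHS]eq_bigr do rewrite mxE raddf_sum.
by rewrite exchange_big; apply: eq_bigr => i _; apply: eq_bigr => j _; apply: qre_mulC.
Qed.

Lemma trform_linear a (x y z : M) :
  trform (qscalar lam mu a *: x + y) z = a * trform x z + trform y z.
Proof. by rewrite trformDl trformZl. Qed.

Lemma trform_sandwich (s x y : M) :
  s *m s = 1%:M -> trform (s *m x *m s) (s *m y *m s) = trform x y.
Proof.
move=> ss; rewrite /trform !mulmxA -(mulmxA _ s s) ss mulmx1.
by rewrite -/(trform (s *m x *m y) s) trformC /trform !mulmxA ss mul1mx.
Qed.

Lemma trformDr (x y z : M) : trform z (x + y) = trform z x + trform z y.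
Proof. by rewrite !(trformC z) trformDl. Qed.

Lemma trformZr a (x z : M) : trform z (qscalar lam mu a *: x) = a * trform z x.
Proof. by rewrite !(trformC z) trformZl. Qed.

Lemma qre_tr_adjmx (z : M) : qre (\tr (adjmx z)) = qre (\tr z).
Proof. by rewrite /mxtrace !raddf_sum; apply: eq_bigr => i _; rewrite mxE. Qed.

Lemma trform_adjmxr (h y : M) : adjmx h = h -> trform h (adjmx y) = trform h y.
Proof. by move=> hh; rewrite trformC /trform -{1}hh -adjmxM qre_tr_adjmx. Qed.

Lemma trform_projAr (h y : M) : (forall i j, inA k (h i j)) ->
  trform h (map_mx (projA k) y) = trform h y.
Proof.
move=> Ah; rewrite /trform /mxtrace !raddf_sum; apply: eq_bigr => i _.
rewrite !mxE !raddf_sum; apply: eq_bigr => l _; rewrite mxE; exact: qre_mul_projA.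
Qed.

Lemma trform_delta (h : M) i j (e : Q) : trform h (e *: delta_mx j i) = qre (h i j * e).
Proof.
rewrite /trform /mxtrace (bigD1 i) //= big1 ?addr0 => [|p pi].
  rewrite mxE (bigD1 j) //= big1 ?addr0 => [|r rj]; first by rewrite !mxE !eqxx mulr1.
  by rewrite !mxE (negbTE rj) mulr0 mulr0.
by rewrite mxE big1 // => r _; rewrite !mxE (negbTE pi) andbF mulr0 mulr0.
Qed.

Hypothesis two_neq0 : (2%:R : F) != 0.

Lemma scale_half (z : M) : qscalar lam mu 2^-1 *: (z + z) = z.
Proof. by rewrite -mulr2n -scalerMnr scalerMnl -rmorphMn -mulr_natr mulVf // rmorph1 scale1r. Qed.

(* Entrywise projection onto A followed by symmetrization: a projection of M_n(Q(F)) onto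
   H_n(A) that is self-adjoint for trform (trform_hprojr), so trform is nondegenerate on
   H_n(A) because it is on all matrices (trform_delta). *)
Definition hproj (y : M) : M :=
  qscalar lam mu 2^-1 *: (map_mx (projA k) y + adjmx (map_mx (projA k) y)).

Lemma hproj_inH y : inH k (hproj y).
Proof.
split; last by rewrite madjE /hproj adjmxZ adjmxD adjmxK addrC.
move=> i j; rewrite !mxE; apply: inAM; first exact: inA_scalar.
by apply: inAD; [|apply: inA_qbar]; apply: projA_inA.
Qed.

Lemma hproj_id (h : M) : inH k h -> hproj h = h.
Proof.
move=> hh; rewrite /hproj; have -> : map_mx (projA k) h = h.
  by apply/matrixP => i j; rewrite mxE projA_id //; apply: hh.1.
by rewrite inH_adjmx // scale_half.
Qed.

Lemma hprojD (x y : M) : hproj (x + y) = hproj x + hproj y.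
Proof. by rewrite /hproj map_mxD adjmxD addrACA scalerDr. Qed.

Lemma hprojZ c (x : M) : hproj (qscalar lam mu c *: x) = qscalar lam mu c *: hproj x.
Proof.
rewrite /hproj.
have -> : map_mx (projA k) (qscalar lam mu c *: x) = qscalar lam mu c *: map_mx (projA k) x.
  by apply/matrixP => i j; rewrite !mxE; apply: projA_scalar.
by rewrite adjmxZ -scalerDr !scalerA qscalarC.
Qed.

Lemma trform_hprojr (h y : M) : inH k h -> trform h (hproj y) = trform h y.
Proof.
move=> hh; rewrite trformZr trformDr trform_adjmxr ?inH_adjmx // trform_projAr; last exact: hh.1.
by rewrite -mulr2n -[trform h y *+ 2]mulr_natl mulrA mulVf // mul1r.
Qed.

Lemma hproj0 : hproj 0 = 0.
Proof. by rewrite -(scale0r 0) -(rmorph0 (qscalar lam mu)) hprojZ !scale0r. Qed.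

Lemma hproj_sum (I : Type) (r : seq I) (P : pred I) (f : I -> M) :
  hproj (\sum_(i <- r | P i) f i) = \sum_(i <- r | P i) hproj (f i).
Proof. exact: (big_morph hproj hprojD hproj0). Qed.

Definition hbasis (t : 'I_n * 'I_n * 'I_4) : M :=
  hproj (qbasis lam mu t.2 *: delta_mx t.1.1 t.1.2).
Definition hcoord (t : 'I_n * 'I_n * 'I_4) (x : M) : F := qcoord t.2 (x t.1.1 t.1.2).

Lemma inH_sum_hbasis (x : M) : inH k x -> x = \sum_t qscalar lam mu (hcoord t x) *: hbasis t.
Proof.
move=> hx; transitivity (\sum_i \sum_j \sum_q
    qscalar lam mu (qcoord q (x i j)) *: hbasis (i, j, q)); last by rewrite !pair_big.
rewrite -{1}(hproj_id hx) {1}(matrix_sum_delta x) hproj_sum; apply: eq_bigr => i _.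
rewrite hproj_sum; apply: eq_bigr => j _.
rewrite {1}(quat_sum_basis (x i j)) scaler_suml hproj_sum; apply: eq_bigr => q _.
by rewrite -scalerA hprojZ.
Qed.

Hypotheses (lam_neq0 : lam != 0) (mu_neq0 : mu != 0).

Lemma trform_nondeg (h : M) : inH k h -> (forall x, inH k x -> trform h x = 0) -> h = 0.
Proof.
move=> hh h_perp; apply/matrixP => i j; rewrite mxE.
apply: qre_mul_eq0 => // e.
by rewrite -trform_delta -trform_hprojr // h_perp //; apply: hproj_inH.
Qed.

End HermitianMatrices.

Arguments maddE {F} lam mu {n}.
Arguments moppE {F} lam mu {n}.
Arguments mscaleE {F} lam mu {n}.
Arguments midE {F} lam mu {n}.

Section QuatMatrixModule.
Variables (F : fieldType) (lam mu : F) (n : nat).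

(* Matrices over Q(F) form a Q(F)-module only; this alias carries the F-vector space
   structure c *: x := qscalar c *: x needed to view H_n(A) as a space over F. *)
Definition qmx : Type := 'M[quat_ring lam mu]_n.
HB.instance Definition _ := GRing.Zmodule.on qmx.

Let qmx_scale (c : F) (x : qmx) : qmx := qscalar lam mu c *: x.

Let qmx_scaleA a b (x : qmx) : qmx_scale a (qmx_scale b x) = qmx_scale (a * b) x.
Proof. by rewrite /qmx_scale scalerA rmorphM. Qed.
Let qmx_scale1 : left_id 1 qmx_scale.
Proof. by move=> x; rewrite /qmx_scale rmorph1 scale1r. Qed.
Let qmx_scaleDr : right_distributive qmx_scale +%R.
Proof. by move=> a x y; rewrite /qmx_scale scalerDr. Qed.
Let qmx_scaleDl (x : qmx) : {morph qmx_scale^~ x : a b / a + b}.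
Proof. by move=> a b; rewrite /qmx_scale rmorphD scalerDl. Qed.

HB.instance Definition _ :=
  GRing.Zmodule_isLmodule.Build F qmx qmx_scaleA qmx_scale1 qmx_scaleDr qmx_scaleDl.

End QuatMatrixModule.

Section TwoLocal.
Variables (F : fieldType) (lam mu : F) (k : akind) (n : nat).
Hypothesis two_neq0 : (2%:R : F) != 0.
Local Notation Q := (quat_ring lam mu).
Local Notation M := 'M[Q]_n.

Lemma symmetry_sqr (s : M) : symmetry lam mu k s -> inH k s /\ s *m s = 1%:M.
Proof.
by case=> hs; rewrite /jprod (mscaleE lam mu) (maddE lam mu) mmulE (midE lam mu) scale_half.
Qed.

Lemma UopE (s x : M) : s *m s = 1%:M -> Uop lam mu s x = s *m x *m s.
Proof.
move=> ss; rewrite /Uop /jprod !mmulE !(maddE lam mu) !(mscaleE lam mu) (moppE lam mu).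
rewrite mulmx_scalar -scalemxAl mulmxDr mulmxDl !mulmxA ss mul1mx -(mulmxA x) ss mulmx1.
rewrite [s *m x *m s + x]addrC scale_half // scalerA -rmorphM mulfV // rmorph1 scale1r.
by rewrite addrC addKr.
Qed.

Variable D : M -> M.
Hypothesis D_2local : two_local_1_aut lam mu k D.

Lemma two_local_sandwich (x y : M) : inH k x -> inH k y ->
  exists s : M, [/\ inH k s, s *m s = 1%:M, D x = s *m x *m s & D y = s *m y *m s].
Proof.
move=> hx hy; have [s [/symmetry_sqr[hs ss] [Dx Dy]]] := D_2local hx hy.
by exists s; rewrite Dx Dy !UopE.
Qed.

Lemma two_local_inH (x : M) : inH k x -> inH k (D x).
Proof.
by move=> hx; have [s [hs _ -> _]] := two_local_sandwich hx hx; apply: inH_sandwich.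
Qed.

Lemma two_local_trform (x y : M) : inH k x -> inH k y -> trform (D x) (D y) = trform x y.
Proof.
by move=> hx hy; have [s [_ ss -> ->]] := two_local_sandwich hx hy; apply: trform_sandwich.
Qed.

Lemma two_local_sqr (x : M) : inH k x -> D (x *m x) = D x *m D x.
Proof.
move=> hx; have [s [_ ss -> ->]] := two_local_sandwich hx (inH_sqr hx).
by rewrite !mulmxA -(mulmxA _ s s) ss mulmx1.
Qed.

Hypotheses (lam_neq0 : lam != 0) (mu_neq0 : mu != 0).

Lemma two_local_linear_bijective :
  [/\ forall x y : M, inH k x -> inH k y -> D (x + y) = D x + D y,
      forall c (x : M), inH k x -> D (qscalar lam mu c *: x) = qscalar lam mu c *: D x,
      forall x y : M, inH k x -> inH k y -> D x = D y -> x = y &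
      forall y : M, inH k y -> exists2 x, inH k x & D x = y].
Proof.
pose b (l : 'I_#|{: 'I_n * 'I_n * 'I_4}|) : qmx lam mu n := hbasis lam mu k (enum_val l).
pose coord (l : 'I_#|{: 'I_n * 'I_n * 'I_4}|) (x : qmx lam mu n) := hcoord (enum_val l) x.
have S_lin a (x y : qmx lam mu n) : inH k x -> inH k y -> inH k (a *: x + y).
  by move=> hx hy; apply: inHD => //; apply: inHZ.
have coordK (x : qmx lam mu n) : inH k x -> x = \sum_l coord l x *: b l.
  by move=> hx; rewrite {1}(inH_sum_hbasis two_neq0 hx) big_enum_val.
have [DD DZ Dinj Dsurj] := isometry_linear_bijective (inH0 lam mu k n) S_lin
  (@trformC _ lam mu n) (@trform_linear _ lam mu n) (trform_nondeg two_neq0 lam_neq0 mu_neq0)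
  (fun l => hproj_inH _ _) coordK two_local_inH two_local_trform.
by split.
Qed.

Lemma two_local_jprod (x y : M) : inH k x -> inH k y ->
  D (jprod lam mu x y) = jprod lam mu (D x) (D y).
Proof.
move=> hx hy; have [DD DZ _ _] := two_local_linear_bijective.
have DB (u v : M) : inH k u -> inH k v -> D (u - v) = D u - D v.
  by move=> hu hv; rewrite -[in RHS](subrK v u) [in RHS]DD ?addrK //; apply: inHB.
have hxy := inHD hx hy; have [hxx hyy hss] := And3 (inH_sqr hx) (inH_sqr hy) (inH_sqr hxy).
rewrite /jprod !mmulE !(maddE lam mu) !(mscaleE lam mu) !mulmx_polar.
have hd := inHB hss hxx; have hpol := inHB hd hyy.
by rewrite DZ // !DB // (two_local_sqr hxy) (two_local_sqr hx) (two_local_sqr hy) DD.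
Qed.

End TwoLocal.

Theorem theorem4p7 (F : fieldType) (lam mu : F) (k : akind) (n : nat) :
  (2%:R : F) != 0 ->
  (3 <= n)%N ->
  lam != 0 -> mu != 0 ->
  division_alg lam mu k ->
  forall D : 'M[quat F]_n -> 'M[quat F]_n,
    two_local_1_aut lam mu k D -> jordan_automorphism lam mu k D.
Proof.
move=> two_neq0 _ lam_neq0 mu_neq0 _ D D_2local.
have [DD DZ Dinj Dsurj] := two_local_linear_bijective two_neq0 D_2local lam_neq0 mu_neq0.
split; last split; last split; last split; last split.
- exact: (@two_local_inH F lam mu k n two_neq0 D D_2local).
- by move=> x y hx hy; rewrite !(maddE lam mu) DD.
- by move=> c x hx; rewrite !(mscaleE lam mu) DZ.
- exact: (@two_local_jprod F lam mu k n two_neq0 D D_2local lam_neq0 mu_neq0).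
- exact: Dinj.
- exact: Dsurj.
Qed.
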